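(* Let $(P,\le,A_1\ldots A_k)$ be a regular poset of width $w$ with node tree $(\mathcal{N},\prec)$. Suppose $\mathcal{F}\subseteq\mathcal{N}$ is ancestor-free and for every node $(X,Y,<)\in\mathcal{F}$ a perfect matching $M(X,Y,<)$ of the bipartite graph $(X,Y,<)$ is fixed. Let $F=\bigcup_{(X,Y,<)\in\mathcal{F}}(X\cup Y)$. Then there is a partition of $(F,\le)$ into $w$ chains such that for every node $(X,Y,<)\in\mathcal{F}$ and every edge $(a<b)$ of $M(X,Y,<)$, the elements $a$ and $b$ lie in the same chain of this partition.
   Context: Let $(P,\le)$ be a finite poset of width $w$. For $A\subseteq P$ let $A{\uparrow}=\{y: x\le y\text{ for some }x\in A\}$, $A{\downarrow}=\{y: y\le x\text{ for some }x\in A\}$. For maximal antichains $A,B$ write $A\sqsubseteq B$ if $A\subseteq B{\downarrow}$, and $A\sqsubset B$ if also $A\ne B$. For disjoint antichains $A\sqsubset B$, $(A,B,<)$ is the bipartite graph with classes $A,B$ and edges $(a<b)$ for $a\in A,b\in B$, $a<b$; it is regular if every edge lies in a perfect matching. A regular poset $(P,\le,A_1\ldots A_k)$: $A_1,\dots,A_k$ are maximum antichains partitioning $P$, $(\{A_1,\dots,A_k\},\sqsubseteq)$ is a linear order with minimum $A_1$ and maximum $A_2$, $a<b$ for all $a\in A_1,b\in A_2$, and for every $t\in[2,k]$ and every $A_p\sqsubset A_s$ consecutive in $(\{A_1,\dots,A_t\},\sqsubseteq)$ the graph $(A_p,A_s,<)$ is regular. A node is a bipartite graph $(X,Y,<)$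 where, for some such consecutive pair $A_p\sqsubset A_s$ (at some stage $t$), $X\subseteq A_p$, $Y\subseteq A_s$ and $X\cup Y$ is the vertex set of a connected component of $(A_p,A_s,<)$; $\mathrm{Int}(X,Y,<)=X{\uparrow}\cap Y{\downarrow}$. Node tree $(\mathcal{N},\prec)$: $\mathcal{N}$ is the set of all nodes; when for $t\ge3$ the antichain $A_t$ is inserted between $A_p\sqsubset A_s$ consecutive at stage $t-1$, each node $M$ of $(A_p,A_t,<)$ or $(A_t,A_s,<)$ is a child of the unique node $N$ of $(A_p,A_s,<)$ with $\mathrm{Int}(M)\subset\mathrm{Int}(N)$; this is a rooted tree with root $(A_1,A_2,<)$. A set $\mathcal{F}\subseteq\mathcal{N}$ is ancestor-free if no node of $\mathcal{F}$ is a descendant of another node of $\mathcal{F}$. *)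

From mathcomp Require Import all_boot all_order.
From Stdlib Require Import Relations.
Set Implicit Arguments. Unset Strict Implicit. Unset Printing Implicit Defensive.
Import Order.Theory.

Section PosetDefs.
Context {d : Order.disp_t} {T : finPOrderType d}.

Definition antichain (A : {set T}) : bool :=
  [forall x in A, forall y in A, (x != y) ==> ~~ (x <= y)%O].

Definition chain (C : {set T}) : bool :=
  [forall x in C, forall y in C, (x <= y)%O || (y <= x)%O].

Definition max_antichain (w : nat) (A : {set T}) : bool :=
  antichain A && (#|A| == w).

Definition upset (A : {set T}) : {set T} := [set y | [exists x in A, (x <= y)%O]].
Definition downset (A : {set T}) : {set T} := [set y | [exists x in A, (y <= x)%O]].

Definition sqle (A B : {set T}) : bool := A \subset downset B.
Definition sqlt (A B : {set T}) : bool := sqle A B && (A != B).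

Definition perfect_matching (X Y : {set T}) (M : {set T * T}) : bool :=
  [&& [forall e in M, [&& e.1 \in X, e.2 \in Y & (e.1 < e.2)%O]],
      [forall x in X, #|[set e in M | e.1 == x]| == 1] &
      [forall y in Y, #|[set e in M | e.2 == y]| == 1]].

Definition regular_bip (X Y : {set T}) : Prop :=
  forall a b, a \in X -> b \in Y -> (a < b)%O ->
    exists M, perfect_matching X Y M /\ (a, b) \in M.

Definition bip_adj (X Y : {set T}) : rel T :=
  fun x y => ((x \in X) && (y \in Y) && (x < y)%O) || ((y \in X) && (x \in Y) && (y < x)%O).

Definition component (X Y S : {set T}) : Prop :=
  exists2 x, x \in X :|: Y & S = [set y | connect (bip_adj X Y) x y].

Definition consecutive (A : nat -> {set T}) (t p s : nat) : Prop :=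
  [/\ 1 <= p <= t, 1 <= s <= t, sqlt (A p) (A s) &
      forall q, 1 <= q <= t -> ~~ (sqlt (A p) (A q) && sqlt (A q) (A s))].

Definition regular_poset (w k : nat) (A : nat -> {set T}) : Prop :=
  2 <= k /\
  (forall i, 1 <= i <= k -> max_antichain w (A i)) /\
  (forall i j, 1 <= i <= k -> 1 <= j <= k -> i != j -> [disjoint A i & A j]) /\
  (forall x : T, exists2 i, 1 <= i <= k & x \in A i) /\
  (forall i j, 1 <= i <= k -> 1 <= j <= k -> sqle (A i) (A j) || sqle (A j) (A i)) /\
  (forall i, 1 <= i <= k -> sqle (A 1) (A i) && sqle (A i) (A 2)) /\
  (forall a b, a \in A 1 -> b \in A 2 -> (a < b)%O) /\
  (forall t p s, 2 <= t <= k -> consecutive A t p s -> regular_bip (A p) (A s)).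

(* A node (X,Y,<) is encoded by the pair (X,Y). *)
Definition node_of (A : nat -> {set T}) (p s : nat) (N : {set T} * {set T}) : Prop :=
  [/\ N.1 \subset A p, N.2 \subset A s & component (A p) (A s) (N.1 :|: N.2)].

Definition is_node (A : nat -> {set T}) (k : nat) (N : {set T} * {set T}) : Prop :=
  exists t p s, 2 <= t <= k /\ consecutive A t p s /\ node_of A p s N.

Definition Int (N : {set T} * {set T}) : {set T} := upset N.1 :&: downset N.2.

Definition child (A : nat -> {set T}) (k : nat) (N M : {set T} * {set T}) : Prop :=
  exists t p s, [/\ 3 <= t <= k, consecutive A t.-1 p s,
    sqlt (A p) (A t) && sqlt (A t) (A s),
    node_of A p t M \/ node_of A t s M &
    node_of A p s N /\ Int M \proper Int N].

Definition descendant (A : nat -> {set T}) (k : nat) (M N : {set T} * {set T}) : Prop :=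
  clos_trans _ (child A k) N M.

Definition ancestor_free (A : nat -> {set T}) (k : nat)
  (F : {set {set T} * {set T}}) : Prop :=
  forall M N, M \in F -> N \in F -> ~ descendant A k M N.

End PosetDefs.

Definition width {d} (T : finPOrderType d) : nat :=
  \max_(A : {set T} | antichain A) #|A|.

From mathcomp Require Import all_boot all_order zify.
From Stdlib Require Import Relations Classical ClassicalEpsilon.
Import Order.Theory.
Set Implicit Arguments. Unset Strict Implicit. Unset Printing Implicit Defensive.

(** Add to [F] the leaves of the node tree (the nodes of the last stage) that lie below no node
    of [F]: the family stays ancestor-free, and each added leaf has a perfect matching by
    regularity of the last stage.  The key fact is that a node whose two layers lie between
    those of a node [N] and which has a vertex in [Int N] is [N] or a descendant of [N]: the
    first layer inserted between the layers of [N] splits [N] into children, one of which again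
    has this property.  By ancestor-freeness, two nodes of the extended family sharing a lower
    (or an upper) vertex coincide, so the fixed matchings glue to a partial injection [up] with
    [x < up x].  Every vertex of the extended family outside [A 1] is the upper end of a
    matching edge (for a vertex occurring only as a lower vertex, the leaf just below it, or
    the node of [F] above that leaf, provides one).  Hence the [up]-orbits of the [w] elements
    of [A 1] are [w] disjoint chains covering [F], and every fixed matching edge joins two
    consecutive elements of one orbit. *)

Section Poset.
Context {d : Order.disp_t} {T : finPOrderType d}.
Implicit Types (B C D X Y : {set T}) (x y z : T).

Lemma antichain_le_eq B x y : antichain B -> x \in B -> y \in B -> (x <= y)%O -> x = y.
Proof.
move=> /forallP acB xB yB xy; apply/eqP; apply: contraTT xy => nxy.
by move/forallP: (implyP (acB x) xB) => /(_ y); rewrite yB nxy.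
Qed.

Lemma upsetP B y : reflect (exists2 x, x \in B & (x <= y)%O) (y \in upset B).
Proof. by rewrite inE; apply: (iffP existsP) => [[x /andP[]]|[x]]; exists x => //; apply/andP. Qed.

Lemma downsetP B y : reflect (exists2 x, x \in B & (y <= x)%O) (y \in downset B).
Proof. by rewrite inE; apply: (iffP existsP) => [[x /andP[]]|[x]]; exists x => //; apply/andP. Qed.

Lemma IntP (N : {set T} * {set T}) y :
  reflect ((exists2 x, x \in N.1 & (x <= y)%O) /\ (exists2 x, x \in N.2 & (y <= x)%O))
          (y \in Int N).
Proof.
rewrite inE; apply: (iffP andP) => [[/upsetP ? /downsetP ?]|[? ?]] //.
by split; [apply/upsetP | apply/downsetP].
Qed.

Lemma sqle_above B C x : sqle B C -> x \in B -> exists2 y, y \in C & (x <= y)%O.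
Proof. by move=> /subsetP sBC /sBC /downsetP. Qed.

Lemma sqle_trans B C D : sqle B C -> sqle C D -> sqle B D.
Proof.
move=> sBC sCD; apply/subsetP => x /(sqle_above sBC) [y /(sqle_above sCD) [z zD yz] xy].
by apply/downsetP; exists z; last exact: le_trans yz.
Qed.

Lemma connect_invariant (e : rel T) (Q : T -> Prop) x :
  Q x -> (forall u v, Q u -> e u v -> Q v) -> forall y, connect e x y -> Q y.
Proof.
move=> Qx Qe y /connectP [p + ->]; elim: p x Qx => [|z p IHp] x Qx //= /andP [exz pz].
exact: IHp (Qe _ _ Qx exz) pz.
Qed.

Lemma bip_adj_sym X Y : ssrbool.symmetric (bip_adj X Y).
Proof. by move=> x y; rewrite /bip_adj orbC. Qed.

Definition comp_at X Y x : {set T} * {set T} :=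
  ([set z in X | connect (bip_adj X Y) x z], [set z in Y | connect (bip_adj X Y) x z]).

Lemma comp_at_component X Y x :
  x \in X :|: Y -> component X Y ((comp_at X Y x).1 :|: (comp_at X Y x).2).
Proof.
move=> xXY; exists x => //; apply/setP => z.
rewrite !inE -andb_orl andb_idl // => xz; rewrite -in_setU.
move: z xz; apply: connect_invariant => // u v _.
by rewrite /bip_adj !inE => /orP [/andP [/andP [_ ->]]|/andP [/andP [->]]]; rewrite ?orbT.
Qed.

Section NodeOf.
Variables (A : nat -> {set T}) (p s : nat) (N : {set T} * {set T}).

Lemma node_of_comp_at x : x \in A p :|: A s -> node_of A p s (comp_at (A p) (A s) x).
Proof.
move=> xps; split; last exact: comp_at_component.
  by apply/subsetP => z; rewrite inE => /andP [].
by apply/subsetP => z; rewrite inE => /andP [].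
Qed.

Hypothesis hN : node_of A p s N.

Lemma node1_A x : x \in N.1 -> x \in A p.
Proof. by case: hN => /subsetP sub _ _ /sub. Qed.

Lemma node2_A y : y \in N.2 -> y \in A s.
Proof. by case: hN => _ /subsetP sub _ /sub. Qed.

Lemma node_adj_closed z z' :
  z \in N.1 :|: N.2 -> bip_adj (A p) (A s) z z' -> z' \in N.1 :|: N.2.
Proof. by case: hN => _ _ [x0 _ ->]; rewrite !inE => x0z /connect1; exact: connect_trans. Qed.

End NodeOf.

Lemma descendant_Int (A : nat -> {set T}) k M N : descendant A k M N -> Int M \subset Int N.
Proof.
rewrite /descendant; elim=> [N0 M0 [t [p [s [_ _ _ _ [_ /proper_sub //]]]]] | N0 C M0 _ CN _ MC].
exact: subset_trans MC CN.
Qed.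

Section PerfectMatching.
Variables (X Y : {set T}) (M : {set T * T}).
Hypothesis pmM : perfect_matching X Y M.

Lemma perfect_matching_edge e : e \in M -> [/\ e.1 \in X, e.2 \in Y & (e.1 < e.2)%O].
Proof. by case/and3P: pmM => /forallP /(_ e) /implyP H _ _ /H /and3P []. Qed.

Lemma perfect_matching_fun x y y' : (x, y) \in M -> (x, y') \in M -> y = y'.
Proof.
move=> xy xy'; have [xX _ _] := perfect_matching_edge xy.
case/and3P: pmM => _ /forallP /(_ x) /implyP /(_ xX) /cards1P [e0 Mx] _.
have : (x, y) \in [set e in M | e.1 == x] by rewrite inE xy eqxx.
have : (x, y') \in [set e in M | e.1 == x] by rewrite inE xy' eqxx.
by rewrite Mx !inE => /eqP <- /eqP [].
Qed.

Lemma perfect_matching_inj x x' y : (x, y) \in M -> (x', y) \in M -> x = x'.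
Proof.
move=> xy x'y; have [_ yY _] := perfect_matching_edge xy.
case/and3P: pmM => _ _ /forallP /(_ y) /implyP /(_ yY) /cards1P [e0 My].
have : (x, y) \in [set e in M | e.2 == y] by rewrite inE xy eqxx.
have : (x', y) \in [set e in M | e.2 == y] by rewrite inE x'y eqxx.
by rewrite My !inE => /eqP <- /eqP [].
Qed.

Lemma perfect_matching_cover2 y : y \in Y -> exists x, (x, y) \in M.
Proof.
move=> yY; case/and3P: pmM => _ _ /forallP /(_ y) /implyP /(_ yY) /cards1P [e0 My].
have : e0 \in [set e in M | e.2 == y] by rewrite My set11.
by rewrite inE => /andP [e0M /eqP <-]; exists e0.1; rewrite -surjective_pairing.
Qed.

Lemma perfect_matching_restrict X1 Y1 :
  X1 \subset X -> Y1 \subset Y ->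
  (forall x y, x \in X1 -> y \in Y -> (x < y)%O -> y \in Y1) ->
  (forall x y, x \in X -> y \in Y1 -> (x < y)%O -> x \in X1) ->
  perfect_matching X1 Y1 [set e in M | e.1 \in X1].
Proof.
move=> /subsetP sX1 /subsetP sY1 up1 down1; case/and3P: (pmM) => _ /forallP cX /forallP cY.
apply/and3P; split.
- apply/forallP => e; apply/implyP; rewrite inE => /andP [eM e1].
  have [_ e2 e12] := perfect_matching_edge eM.
  by rewrite e1 e12 (up1 _ _ e1 e2 e12).
- apply/forallP => x; apply/implyP => x1.
  rewrite (_ : [set e in _ | _] = [set e in M | e.1 == x]) ?(implyP (cX x)) ?sX1 //.
  by apply/setP => e; rewrite !inE; case: eqP => [->|]; rewrite ?x1 ?andbT ?andbF.
- apply/forallP => y; apply/implyP => y1.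
  rewrite (_ : [set e in _ | _] = [set e in M | e.2 == y]) ?(implyP (cY y)) ?sY1 //.
  apply/setP => e; rewrite !inE andbAC; case: eqP => [e2|]; rewrite ?andbF ?andbT //.
  apply: andb_idr => eM; have [e1 _ e12] := perfect_matching_edge eM.
  by apply: down1 e1 _ e12; rewrite e2.
Qed.

End PerfectMatching.

Section Orbits.
Variables (f : T -> T) (R : {set T}).
Hypotheses (f_ge : forall x, (x <= f x)%O) (R_antichain : antichain R)
  (f_inj : forall u v, f u = f v -> [\/ u = v, f u = u | f v = v]).

Lemma iter_le m n x : m <= n -> (iter m f x <= iter n f x)%O.
Proof.
move=> /subnK <-; elim: (n - m) => [|j IHj] //.
by rewrite addSn iterS; exact: le_trans IHj (f_ge _).
Qed.

Lemma fconnect_comparable a y z :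
  fconnect f a y -> fconnect f a z -> (y <= z)%O || (z <= y)%O.
Proof.
move=> /iter_findex ay /iter_findex az; rewrite -ay -az.
case: (leqP (findex f a y) (findex f a z)) => [/iter_le -> // | /ltnW /iter_le ->].
by rewrite orbT.
Qed.

Lemma iter_root_inj a a' i j : a \in R -> a' \in R -> iter i f a = iter j f a' -> a = a'.
Proof.
move=> aR a'R; have [n] := ubnP (i + j); elim: n i j => // n IHn [|i] [|j] ltij //.
- move=> /= a_eq; apply/esym/(antichain_le_eq R_antichain a'R aR).
  by rewrite a_eq; exact: (iter_le a' (leq0n j.+1)).
- move=> /= a_eq; apply: (antichain_le_eq R_antichain aR a'R).
  by rewrite -a_eq; exact: (iter_le a (leq0n i.+1)).
rewrite !iterS => eq_f; case: (f_inj eq_f) => [|fixi|fixj].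
- by apply: IHn; lia.
- by apply: (IHn i j.+1); [lia | rewrite iterS -eq_f fixi].
- by apply: (IHn i.+1 j); [lia | rewrite iterS eq_f fixj].
Qed.

Lemma fconnect_root_inj a a' y :
  a \in R -> a' \in R -> fconnect f a y -> fconnect f a' y -> a = a'.
Proof.
move=> aR a'R /iter_findex ay /iter_findex a'y.
exact: iter_root_inj aR a'R (etrans ay (esym a'y)).
Qed.

Lemma fconnect_from_roots (S : T -> Prop) y :
  (forall y, S y -> y \notin R -> exists2 x, S x & f x = y /\ (x < y)%O) ->
  S y -> exists2 a, a \in R & fconnect f a y.
Proof.
move=> S_pred; have [n] := ubnP #|[set z | (z < y)%O]|.
elim: n y => // n IHn y lt_y_n Sy.
have [yR|/(S_pred _ Sy) [x Sx [fxy ltx]]] := boolP (y \in R).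
  by exists y; rewrite ?connect0.
subst y.
have [|a aR ax] := IHn x _ Sx; last by exists a; last exact: connect_trans ax (fconnect1 f x).
rewrite -ltnS; apply: leq_trans lt_y_n; rewrite ltnS; apply: proper_card; apply/properP; split.
  by apply/subsetP => z; rewrite !inE => zx; exact: lt_trans zx ltx.
by exists x; rewrite !inE ?ltxx.
Qed.

Lemma orbit_chain_partition w (S : {set T}) :
  #|R| = w -> (forall y, y \in S -> exists2 a, a \in R & fconnect f a y) ->
  exists ch : 'I_w -> {set T},
    [/\ (forall i j, i != j -> [disjoint ch i & ch j]),
        \bigcup_i ch i = S,
        (forall i, chain (ch i)) &
        (forall x, x \in S -> f x \in S -> exists i, (x \in ch i) && (f x \in ch i))].
Proof.
move=> cardR coverS; pose root (i : 'I_w) := enum_val (cast_ord (esym cardR) i).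
have rootR i : root i \in R by exact: enum_valP.
have root_onto a : a \in R -> exists i, root i = a.
  move=> aR; exists (cast_ord cardR (enum_rank_in aR a)).
  by rewrite /root cast_ordK enum_rankK_in.
exists (fun i => [set y in S | fconnect f (root i) y]); split.
- move=> i j; apply: contraNT; rewrite -setI_eq0 => /set0Pn [y].
  rewrite !inE => /andP [/andP [_ iy] /andP [_ jy]].
  apply/eqP/(cast_ord_inj (eq_n := esym cardR))/enum_val_inj.
  exact: fconnect_root_inj (rootR i) (rootR j) iy jy.
- apply/setP => y; apply/bigcupP/idP => [[i _]|yS]; first by rewrite inE => /andP [].
  have [a aR ay] := coverS y yS; have [i ia] := root_onto a aR.
  by exists i; rewrite // inE yS ia.
- move=> i; apply/forallP => y; apply/implyP; rewrite inE => /andP [_ iy].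
  apply/forallP => z; apply/implyP; rewrite inE => /andP [_ iz].
  exact: fconnect_comparable iy iz.
- move=> x xS fxS; have [a aR ax] := coverS x xS; have [i ia] := root_onto a aR.
  by exists i; rewrite !inE xS fxS ia ax; exact: connect_trans ax (fconnect1 f x).
Qed.

End Orbits.

End Poset.

Section RegularPoset.
Variables (disp : Order.disp_t) (T : finPOrderType disp) (w k : nat) (A : nat -> {set T}).
Hypotheses (hwidth : width T = w) (hreg : regular_poset w k A) (wpos : 0 < w).
Implicit Types (x y z v : T) (L N : {set T} * {set T}).

Local Notation idx i := (1 <= i <= k).
Local Notation ltA i j := (sqlt (A i) (A j)).
Definition leA i j := i = j \/ ltA i j.

Lemma idx1 : idx 1.
Proof. by case: hreg => k2 _; lia. Qed.

Lemma antichain_A i : idx i -> antichain (A i).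
Proof. by case: hreg => _ [maxA _] /maxA /andP []. Qed.

Lemma card_A i : idx i -> #|A i| = w.
Proof. by case: hreg => _ [maxA _] /maxA /andP [_ /eqP]. Qed.

Lemma disjoint_A i j : idx i -> idx j -> i != j -> [disjoint A i & A j].
Proof. by case: hreg => _ [_ [disjA _]]; exact: disjA. Qed.

Lemma sqle_total i j : idx i -> idx j -> sqle (A i) (A j) || sqle (A j) (A i).
Proof. by case: hreg => _ [_ [_ [_ [totA _]]]]; exact: totA. Qed.

Lemma sqle_A1 i : idx i -> sqle (A 1) (A i).
Proof. by case: hreg => _ [_ [_ [_ [_ [minA _]]]]] /minA /andP []. Qed.

Lemma regular_consecutive t p s :
  2 <= t <= k -> consecutive A t p s -> regular_bip (A p) (A s).
Proof. by case: hreg => _ [_ [_ [_ [_ [_ [_ regA]]]]]]; exact: regA. Qed.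

Lemma idx_unique i j x : idx i -> idx j -> x \in A i -> x \in A j -> i = j.
Proof.
move=> Ii Ij xi xj; case: (eqVneq i j) => // /(disjoint_A Ii Ij) /disjointFr.
by move/(_ x xi); rewrite xj.
Qed.

Lemma A_nonempty i : idx i -> exists x, x \in A i.
Proof. by move=> Ii; apply/set0Pn; rewrite -card_gt0 card_A. Qed.

Lemma ltA_irr i : ~ ltA i i.
Proof. by rewrite /sqlt eqxx andbF. Qed.

Lemma ltA_disjoint i j x : idx i -> idx j -> ltA i j -> x \in A i -> x \in A j -> False.
Proof. by move=> Ii Ij + xi xj; rewrite (idx_unique Ii Ij xi xj); exact: ltA_irr. Qed.

Lemma sqle_idx_anti i j : idx i -> idx j -> sqle (A i) (A j) -> sqle (A j) (A i) -> i = j.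
Proof.
move=> Ii Ij ij ji; have [x xi] := A_nonempty Ii.
have [y yj xy] := sqle_above ij xi; have [z zi yz] := sqle_above ji yj.
have xz : x = z := antichain_le_eq (antichain_A Ii) xi zi (le_trans xy yz).
subst z; have xy_eq : x = y by apply: le_anti; rewrite xy yz.
by apply: (idx_unique Ii Ij xi); rewrite xy_eq.
Qed.

Lemma ltA_asym i j : idx i -> idx j -> ltA i j -> ~ ltA j i.
Proof.
move=> Ii Ij /andP [ij nij] /andP [ji _].
by move: nij; rewrite (sqle_idx_anti Ii Ij ij ji) eqxx.
Qed.

Lemma ltA_trans i j l : idx i -> idx j -> idx l -> ltA i j -> ltA j l -> ltA i l.
Proof.
move=> Ii Ij Il ij jl; rewrite /sqlt (sqle_trans (proj1 (andP ij)) (proj1 (andP jl))) /=.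
by apply/eqP => Ail; move: jl; rewrite -Ail; exact: ltA_asym Ii Ij ij.
Qed.

Lemma ltA_total i j : idx i -> idx j -> [\/ i = j, ltA i j | ltA j i].
Proof.
move=> Ii Ij; case: (eqVneq i j) => [|nij]; first by constructor 1.
have nA : A i != A j.
  apply: contraNneq nij => Aij; apply/eqP; have [x xi] := A_nonempty Ii.
  by apply: (idx_unique Ii Ij xi); rewrite -Aij.
case/orP: (sqle_total Ii Ij) => h; [constructor 2 | constructor 3]; first by rewrite /sqlt h.
by rewrite /sqlt h eq_sym.
Qed.

Lemma leA_total i j : idx i -> idx j -> leA i j \/ leA j i.
Proof.
by move=> Ii Ij; case: (ltA_total Ii Ij) => [->|ij|ji]; [left; left | left; right | right; right].
Qed.

Lemma ltA_above i j x :
  idx i -> idx j -> ltA i j -> x \in A i -> exists2 y, y \in A j & (x < y)%O.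
Proof.
move=> Ii Ij ij xi; have [y yj xy] := sqle_above (proj1 (andP ij)) xi.
exists y; rewrite // lt_neqAle xy andbT; apply/eqP => xy_eq.
by rewrite -xy_eq in yj; exact: ltA_disjoint Ii Ij ij xi yj.
Qed.

Lemma ltA_not_ge i j x y :
  idx i -> idx j -> ltA i j -> x \in A i -> y \in A j -> ~ (y <= x)%O.
Proof.
move=> Ii Ij ij xi yj yx; have [z zj xz] := ltA_above Ii Ij ij xi.
have yz : y = z := antichain_le_eq (antichain_A Ij) yj zj (le_trans yx (ltW xz)).
by rewrite -yz in xz; move: (lt_le_trans xz yx); rewrite ltxx.
Qed.

Lemma ltA_below i j y :
  idx i -> idx j -> ltA i j -> y \in A j -> exists2 x, x \in A i & (x < y)%O.
Proof.
move=> Ii Ij ij yj; have [/exists_inP [x xi xy]|none] := boolP [exists x in A i, (x < y)%O].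
  by exists x.
(* The only use of the width: otherwise [y |: A i] would be a larger antichain. *)
have yi : y \notin A i by apply/negP => yi; exact: ltA_disjoint Ii Ij ij yi yj.
have ac : antichain (y |: A i).
  apply/forallP => x; apply/implyP => /setU1P xA.
  apply/forallP => z; apply/implyP => /setU1P zA; apply/implyP => nxz; apply/negP => xz.
  case: xA zA nxz xz => [->|xi] [->|zi] nxz xz.
  - by rewrite eqxx in nxz.
  - exact: ltA_not_ge Ii Ij ij zi yj xz.
  - by move/negP: none; apply; apply/exists_inP; exists x; rewrite // lt_neqAle nxz xz.
  - by move: nxz; rewrite (antichain_le_eq (antichain_A Ii) xi zi xz) eqxx.
have := @leq_bigmax_cond _ (fun B : {set T} => antichain B) (fun B => #|B|) _ ac.
by rewrite -/(width T) hwidth cardsU1 yi (card_A Ii); lia.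
Qed.

Lemma leA_above j u y :
  idx j -> idx u -> leA j u -> y \in A j -> exists2 z, z \in A u & (y <= z)%O.
Proof.
move=> Ij Iu [<-|ju] yj; first by exists y.
by have [z zu /ltW yz] := ltA_above Ij Iu ju yj; exists z.
Qed.

Lemma leA_below u j y :
  idx u -> idx j -> leA u j -> y \in A j -> exists2 z, z \in A u & (z <= y)%O.
Proof.
move=> Iu Ij [->|uj] yj; first by exists y.
by have [z zu /ltW zy] := ltA_below Iu Ij uj yj; exists z.
Qed.

Lemma consecutive_idx t p s : t <= k -> consecutive A t p s -> idx p /\ idx s.
Proof. by move=> tk [/andP [p1 pt] /andP [s1 st] _ _]; rewrite p1 s1 !(leq_trans _ tk). Qed.

Lemma consecutive_ltA t p s : consecutive A t p s -> ltA p s.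
Proof. by case. Qed.

Lemma consecutive_nomid t p s q :
  consecutive A t p s -> 1 <= q <= t -> ltA p q -> ltA q s -> False.
Proof. by case=> _ _ _ nomid /nomid /negP nq pq qs; apply: nq; rewrite pq. Qed.

Lemma consecutive_stage t p s : consecutive A t p s -> 2 <= t.
Proof.
case=> /andP [p1 pt] /andP [s1 st] ps _.
have : p != s by apply/eqP => eps; rewrite eps in ps; exact: ltA_irr ps.
lia.
Qed.

Section Node.
Variables (p s : nat) (N : {set T} * {set T}).
Hypotheses (Ip : idx p) (Is : idx s) (ps : ltA p s) (hN : node_of A p s N).

Lemma node1E x : x \in A p -> (x \in N.1) = (x \in N.1 :|: N.2).
Proof.
move=> xp; rewrite inE; case: (boolP (x \in N.1)) => //= _.
by apply/esym/negP => /(node2_A hN) xs; exact: ltA_disjoint Ip Is ps xp xs.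
Qed.

Lemma node2E y : y \in A s -> (y \in N.2) = (y \in N.1 :|: N.2).
Proof.
move=> ys; rewrite inE; case: (boolP (y \in N.1)) => //= /(node1_A hN) yp.
by case: (ltA_disjoint Ip Is ps yp ys).
Qed.

Lemma node_edge_up x y : x \in N.1 -> y \in A s -> (x < y)%O -> y \in N.2.
Proof.
move=> x1 ys xy; rewrite node2E //; apply: (node_adj_closed hN (z := x)).
  by rewrite inE x1.
by rewrite /bip_adj (node1_A hN x1) ys xy.
Qed.

Lemma node_edge_down x y : x \in A p -> y \in N.2 -> (x < y)%O -> x \in N.1.
Proof.
move=> xp y2 xy; rewrite node1E //; apply: (node_adj_closed hN (z := y)).
  by rewrite inE y2 orbT.
by rewrite /bip_adj (node2_A hN y2) xp xy orbT.
Qed.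

Lemma node1_lt x : x \in N.1 -> exists2 y, y \in N.2 & (x < y)%O.
Proof.
move=> x1; have [y ys xy] := ltA_above Ip Is ps (node1_A hN x1).
by exists y => //; exact: node_edge_up x1 ys xy.
Qed.

Lemma node2_gt y : y \in N.2 -> exists2 x, x \in N.1 & (x < y)%O.
Proof.
move=> y2; have [x xp xy] := ltA_below Ip Is ps (node2_A hN y2).
by exists x => //; exact: node_edge_down xp y2 xy.
Qed.

Lemma node_has_edge : exists x y, [/\ x \in N.1, y \in N.2 & (x < y)%O].
Proof.
case: (hN) => _ _ [x0 + NE]; have : x0 \in N.1 :|: N.2 by rewrite NE inE connect0.
rewrite !inE => /orP [x01|x02] /orP [x0p|x0s].
- by have [y ? ?] := node1_lt x01; exists x0, y.
- by case: (ltA_disjoint Ip Is ps (node1_A hN x01) x0s).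
- by case: (ltA_disjoint Ip Is ps x0p (node2_A hN x02)).
- by have [x ? ?] := node2_gt x02; exists x, x0.
Qed.

Lemma node_sub_Int : N.1 :|: N.2 \subset Int N.
Proof.
apply/subsetP => z; rewrite inE => /orP [z1|z2]; apply/IntP; split.
- by exists z.
- by have [y ? /ltW] := node1_lt z1; exists y.
- by have [x ? /ltW] := node2_gt z2; exists x.
- by exists z.
Qed.

Lemma Int_node1 z : z \in Int N -> z \in A p -> z \in N.1.
Proof.
case/IntP => [[x x1 xz] _] zp.
by rewrite -(antichain_le_eq (antichain_A Ip) (node1_A hN x1) zp xz).
Qed.

Lemma Int_node2 z : z \in Int N -> z \in A s -> z \in N.2.
Proof.
case/IntP => [_ [y y2 zy]] zs.
by rewrite (antichain_le_eq (antichain_A Is) zs (node2_A hN y2) zy).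
Qed.

Lemma Int_leA j z : idx j -> z \in A j -> z \in Int N -> leA p j /\ leA j s.
Proof.
move=> Ij zj /IntP [[x x1 xz] [y y2 zy]]; split.
  case: (ltA_total Ip Ij) => [->|pj|jp]; [by left | by right | exfalso].
  exact: ltA_not_ge Ij Ip jp zj (node1_A hN x1) xz.
case: (ltA_total Ij Is) => [->|js|sj]; [by left | by right | exfalso].
exact: ltA_not_ge Is Ij sj (node2_A hN y2) zj zy.
Qed.

Section Refinement.
Variable u : nat.
Hypotheses (Iu : idx u) (pu : ltA p u) (us : ltA u s).

Lemma comp_lower_in_node x : x \in N.1 -> forall z, connect (bip_adj (A p) (A u)) x z ->
  (z \in A p -> z \in N.1) /\ (z \in A u -> exists2 y, y \in N.2 & (z < y)%O).
Proof.
move=> x1; apply: connect_invariant.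
  by split => // xu; case: (ltA_disjoint Ip Iu pu (node1_A hN x1) xu).
move=> z0 z1 [Q1 Q2]; rewrite /bip_adj.
case/orP => [/andP [/andP [z0p z1u] z01] | /andP [/andP [z1p z0u] z10]].
  split => [z1p|_]; first by case: (ltA_disjoint Ip Iu pu z1p z1u).
  have [y ys z1y] := ltA_above Iu Is us z1u.
  by exists y => //; exact: node_edge_up (Q1 z0p) ys (lt_trans z01 z1y).
have [y y2 z0y] := Q2 z0u.
split => [_|z1u]; last by case: (ltA_disjoint Ip Iu pu z1p z1u).
exact: node_edge_down z1p y2 (lt_trans z10 z0y).
Qed.

Lemma comp_upper_in_node y : y \in N.2 -> forall z, connect (bip_adj (A u) (A s)) y z ->
  (z \in A s -> z \in N.2) /\ (z \in A u -> exists2 x, x \in N.1 & (x < z)%O).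
Proof.
move=> y2; apply: connect_invariant.
  by split => // yu; case: (ltA_disjoint Iu Is us yu (node2_A hN y2)).
move=> z0 z1 [Q1 Q2]; rewrite /bip_adj.
case/orP => [/andP [/andP [z0u z1s] z01] | /andP [/andP [z1u z0s] z10]].
  have [x x1 xz0] := Q2 z0u.
  split => [_|z1u]; last by case: (ltA_disjoint Iu Is us z1u z1s).
  exact: node_edge_up x1 z1s (lt_trans xz0 z01).
split => [z1s|_]; first by case: (ltA_disjoint Iu Is us z1u z1s).
have [x xp xz1] := ltA_below Ip Iu pu z1u.
by exists x => //; exact: node_edge_down xp (Q1 z0s) (lt_trans xz1 z10).
Qed.

Lemma Int_comp_lower_proper x : x \in N.1 -> Int (comp_at (A p) (A u) x) \proper Int N.
Proof.
move=> x1; apply/properP; split.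
  apply/subsetP => z /IntP [[x' x'C x'z] [y' y'C zy']]; apply/IntP.
  move: x'C y'C; rewrite /= !inE => /andP [x'p xx'] /andP [y'u xy']; split.
    by exists x' => //; exact: (comp_lower_in_node x1 xx').1 x'p.
  have [y'' y''2 y'y''] := (comp_lower_in_node x1 xy').2 y'u.
  by exists y'' => //; exact: le_trans zy' (ltW y'y'').
have [_ [y [_ y2 _]]] := node_has_edge.
exists y; first by apply: (subsetP node_sub_Int); rewrite inE y2 orbT.
apply/negP => /IntP [_ [c]]; rewrite /= inE => /andP [cu _] yc.
exact: ltA_not_ge Iu Is us cu (node2_A hN y2) yc.
Qed.

Lemma Int_comp_upper_proper y : y \in N.2 -> Int (comp_at (A u) (A s) y) \proper Int N.
Proof.
move=> y2; apply/properP; split.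
  apply/subsetP => z /IntP [[x' x'C x'z] [y' y'C zy']]; apply/IntP.
  move: x'C y'C; rewrite /= !inE => /andP [x'u yx'] /andP [y's yy']; split; last first.
    by exists y' => //; exact: (comp_upper_in_node y2 yy').1 y's.
  have [x'' x''1 x''x'] := (comp_upper_in_node y2 yx').2 x'u.
  by exists x'' => //; exact: le_trans (ltW x''x') x'z.
have [x [_ [x1 _ _]]] := node_has_edge.
exists x; first by apply: (subsetP node_sub_Int); rewrite inE x1.
apply/negP => /IntP [[c]]; rewrite /= inE => /andP [cu _] cx _.
exact: ltA_not_ge Ip Iu pu (node1_A hN x1) cu cx.
Qed.

Lemma Int_comp_lower v z : v \in Int N -> z \in A u -> (v <= z)%O ->
  exists2 x, x \in N.1 & v \in Int (comp_at (A p) (A u) x).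
Proof.
case/IntP => [[x x1 xv] _] zu vz; exists x => //; have xp := node1_A hN x1.
have xz : (x < z)%O.
  rewrite lt_neqAle (le_trans xv vz) andbT; apply/eqP => xz.
  by rewrite xz in xp; exact: ltA_disjoint Ip Iu pu xp zu.
apply/IntP; split; [exists x | exists z] => //; rewrite /= inE ?xp ?zu ?connect0 //.
by apply: connect1; rewrite /bip_adj xp zu xz.
Qed.

Lemma Int_comp_upper v z : v \in Int N -> z \in A u -> (z <= v)%O ->
  exists2 y, y \in N.2 & v \in Int (comp_at (A u) (A s) y).
Proof.
case/IntP => [_ [y y2 vy]] zu zv; exists y => //; have ys := node2_A hN y2.
have zy : (z < y)%O.
  rewrite lt_neqAle (le_trans zv vy) andbT; apply/eqP => zy.
  by rewrite zy in zu; exact: ltA_disjoint Iu Is us zu ys.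
apply/IntP; split; [exists z | exists y] => //; rewrite /= inE ?ys ?zu ?connect0 //.
by apply: connect1; rewrite /bip_adj zu ys zy orbT.
Qed.

Hypotheses (hu : 2 < u <= k) (hps : consecutive A u.-1 p s).

Lemma child_comp_lower x : x \in N.1 -> child A k N (comp_at (A p) (A u) x).
Proof.
move=> x1; exists u, p, s; split; rewrite ?pu ?us //.
  by left; apply: node_of_comp_at; rewrite inE (node1_A hN x1).
by split; last exact: Int_comp_lower_proper.
Qed.

Lemma child_comp_upper y : y \in N.2 -> child A k N (comp_at (A u) (A s) y).
Proof.
move=> y2; exists u, p, s; split; rewrite ?pu ?us //.
  by right; apply: node_of_comp_at; rewrite inE (node2_A hN y2) orbT.
by split; last exact: Int_comp_upper_proper.
Qed.

End Refinement.

End Node.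

Lemma node_of_eq p s N N' v : idx p -> idx s -> ltA p s ->
  node_of A p s N -> node_of A p s N' -> v \in N.1 :|: N.2 -> v \in N'.1 :|: N'.2 -> N = N'.
Proof.
move=> Ip Is ps hN hN' vN vN'.
have sym := sym_connect_sym (bip_adj_sym (A p) (A s)).
have eU : N.1 :|: N.2 = N'.1 :|: N'.2.
  case: (hN) (hN') vN vN' => _ _ [x _ ->] [_ _ [x' _ ->]]; rewrite !inE => xv x'v.
  apply/setP => z; rewrite !inE; apply/idP/idP => [xz|x'z].
    by apply: connect_trans x'v _; apply: connect_trans xz; rewrite sym.
  by apply: connect_trans xv _; apply: connect_trans x'z; rewrite sym.
case: N N' hN hN' {vN vN'} eU => [N1 N2] [N1' N2'] hN hN' /= eU.
congr pair; apply/setP => z.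
  case: (boolP (z \in A p)) => zp.
    by rewrite (node1E Ip Is ps hN zp) (node1E Ip Is ps hN' zp) eU.
  by apply/idP/idP => [/(node1_A hN)|/(node1_A hN')]; rewrite (negbTE zp).
case: (boolP (z \in A s)) => zs.
  by rewrite (node2E Ip Is ps hN zs) (node2E Ip Is ps hN' zs) eU.
by apply/idP/idP => [/(node2_A hN)|/(node2_A hN')]; rewrite (negbTE zs).
Qed.

Lemma node_of_Int_eq p s N M v : idx p -> idx s -> ltA p s ->
  node_of A p s N -> node_of A p s M -> v \in M.1 :|: M.2 -> v \in Int N -> M = N.
Proof.
move=> Ip Is ps hN hM vM vN; apply: (node_of_eq Ip Is ps hM hN vM).
have := vM; rewrite !inE => /orP [/(node1_A hM) vp|/(node2_A hM) vs].
  by rewrite (Int_node1 Ip hN vN vp).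
by rewrite (Int_node2 Is hN vN vs) orbT.
Qed.

Lemma node_of_idx p s p' s' N : idx p -> idx s -> ltA p s -> node_of A p s N ->
  idx p' -> idx s' -> node_of A p' s' N -> p = p' /\ s = s'.
Proof.
move=> Ip Is ps hN Ip' Is' hN'; have [x [y [x1 y2 _]]] := node_has_edge Ip Is ps hN.
split; first exact: idx_unique Ip Ip' (node1_A hN x1) (node1_A hN' x1).
exact: idx_unique Is Is' (node2_A hN y2) (node2_A hN' y2).
Qed.

Lemma first_insertion t a b q : t <= k -> consecutive A t a b -> idx q -> ltA a q -> ltA q b ->
  exists u, [/\ t < u <= q, ltA a u /\ ltA u b, consecutive A u.-1 a b,
                consecutive A u a u & consecutive A u u b].
Proof.
move=> tk hab Iq aq qb; have [Ia Ib] := consecutive_idx tk hab.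
case: (hab) => /andP [a1 at_] /andP [b1 bt] ab _.
pose P i := (1 <= i <= k) && ltA a i && ltA i b.
have Pq : P q by rewrite /P Iq aq qb.
case: (ex_minnP (ex_intro P q Pq)) => u /andP [/andP [Iu au] ub] umin.
have mid_ge i : idx i -> ltA a i -> ltA i b -> u <= i.
  by move=> Ii ai ib; apply: umin; rewrite /P Ii ai ib.
have tu : t < u.
  rewrite ltnNge; apply/negP => ut; apply: (consecutive_nomid hab _ au ub).
  by case/andP: Iu => -> _.
exists u; split; first by rewrite tu (mid_ge q Iq aq qb).
- by split.
- split; [lia | lia | done | move=> i /andP [i1 iu]; apply/negP; case/andP => ai ib].
  by have := mid_ge i _ ai ib; lia.
- split; [lia | lia | done | move=> i /andP [i1 iu]; apply/negP; case/andP => ai iu'].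
  have Ii : idx i by lia.
  have ieu : i = u by have := mid_ge i Ii ai (ltA_trans Ii Iu Ib iu' ub); lia.
  by rewrite ieu in iu'; exact: ltA_irr iu'.
- split; [lia | lia | done | move=> i /andP [i1 iu]; apply/negP; case/andP => ui ib].
  have Ii : idx i by lia.
  have ieu : i = u by have := mid_ge i Ii (ltA_trans Ia Iu Ii au ui) ib; lia.
  by rewrite ieu in ui; exact: ltA_irr ui.
Qed.

Lemma consecutive_leA_split t c d u :
  t <= k -> consecutive A t c d -> idx u -> u <= t -> leA d u \/ leA u c.
Proof.
move=> tk hcd Iu ut; have [Ic Id] := consecutive_idx tk hcd.
case: (ltA_total Iu Id) => [->|ud|du]; [by left; left | | by left; right].
case: (ltA_total Ic Iu) => [->|cu|uc]; [by right; left | | by right; right].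
by case: (consecutive_nomid hcd _ cu ud); case/andP: Iu => -> _.
Qed.

Lemma nested_eq_or_between t' a b c d : t' <= k -> consecutive A t' c d -> idx b ->
  leA a c -> leA d b -> (c = a /\ d = b) \/ exists q, [/\ idx q, ltA a q, ltA q b & q <= t'].
Proof.
move=> t'k hcd Ib ac db; have [Ic Id] := consecutive_idx t'k hcd; have cd := consecutive_ltA hcd.
case: (hcd) => /andP [_ ct'] /andP [_ dt'] _ _.
case: ac => [ac|ac]; last first.
  by right; exists c; split => //; case: db => [<-|db] //; exact: ltA_trans Ic Id Ib cd db.
case: db => [db|db]; first by left.
by right; exists d; rewrite ac; split.
Qed.

Lemma node_Int_descendant t a b N t' c d M v :
  t <= k -> consecutive A t a b -> node_of A a b N ->
  t' <= k -> consecutive A t' c d -> node_of A c d M ->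
  leA a c -> leA d b -> v \in M.1 :|: M.2 -> v \in Int N -> M = N \/ descendant A k M N.
Proof.
move=> + + + t'k hcd hM + + vM; have [Ic Id] := consecutive_idx t'k hcd.
have cd := consecutive_ltA hcd.
have [[x' x'1 x'v] [y' y'2 vy']] := IntP _ _ (subsetP (node_sub_Int Ic Id cd hM) v vM).
have [n] := ubnP (k - t); elim: n t a b N => // n IHn t a b N lt_n tk hab hN ac db vN.
have [Ia Ib] := consecutive_idx tk hab; have ab := consecutive_ltA hab.
have [[ca db'] | [q [Iq aq qb qt']]] := nested_eq_or_between t'k hcd Ib ac db.
  by left; subst c d; exact: node_of_Int_eq Ia Ib ab hN hM vM vN.
have [u [/andP [tu uq] [au ub] hab' hau hub]] := first_insertion tk hab Iq aq qb.
have uk : u <= k by case/andP: Iq => _; exact: leq_trans uq.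
have Iu : idx u by rewrite (leq_ltn_trans (leq0n t) tu).
have hu : 2 < u <= k by rewrite (leq_ltn_trans (consecutive_stage hab) tu).
have ltu : k - u < n by clear -lt_n tu uk; lia.
have desc_step C : child A k N C -> M = C \/ descendant A k M C -> descendant A k M N.
  by move=> chC [->|dMC]; [exact: t_step | exact: t_trans (t_step _ _ _ _ chC) dMC].
right; case: (consecutive_leA_split t'k hcd Iu (leq_trans uq qt')) => [du|uc].
  have [z zu y'z] := leA_above Id Iu du (node2_A hM y'2).
  have [x x1 vC] := Int_comp_lower Ia hN Iu au vN zu (le_trans vy' y'z).
  apply: (desc_step _ (child_comp_lower Ia Ib ab hN Iu au ub hu hab' x1)).
  apply: (IHn u a u _ ltu uk hau _ ac du vC).
  by apply: node_of_comp_at; rewrite inE (node1_A hN x1).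
have [z zu zx'] := leA_below Iu Ic uc (node1_A hM x'1).
have [y y2 vC] := Int_comp_upper Ib hN Iu ub vN zu (le_trans zx' x'v).
apply: (desc_step _ (child_comp_upper Ia Ib ab hN Iu au ub hu hab' y2)).
apply: (IHn u u b _ ltu uk hub _ uc db vC).
by apply: node_of_comp_at; rewrite inE (node2_A hN y2) orbT.
Qed.

Lemma consecutive_no_cross t a b t' c d : consecutive A t a b -> consecutive A t' c d ->
  ltA c a -> ltA a d -> ltA d b -> False.
Proof.
move=> hab hcd ca ad db.
case: (hab) => /andP [a1 at_] /andP [b1 bt] _ _; case: (hcd) => /andP [c1 ct'] /andP [d1 dt'] _ _.
have t'a : t' < a.
  by rewrite ltnNge; apply/negP => at'; apply: consecutive_nomid hcd _ ca ad; rewrite a1.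
have td : t < d.
  by rewrite ltnNge; apply/negP => dt; apply: consecutive_nomid hab _ ad db; rewrite d1.
lia.
Qed.

Lemma leaf_no_child q p L M : consecutive A k q p -> node_of A q p L -> ~ child A k L M.
Proof.
move=> hc hL [t [p' [s' [/andP [t3 tk] hc' /andP [p't ts'] _ [hL' _]]]]].
have [Iq Ip] := consecutive_idx (leqnn k) hc.
have [Ip' Is'] := consecutive_idx (leq_trans (leq_pred t) tk) hc'.
have [ep es] := node_of_idx Iq Ip (consecutive_ltA hc) hL Ip' Is' hL'.
by subst p' s'; apply: consecutive_nomid hc _ p't ts'; rewrite tk andbT; lia.
Qed.

Lemma leaf_no_descendant q p L M : consecutive A k q p -> node_of A q p L -> ~ descendant A k M L.
Proof.
move=> hc hL dML; case: (clos_trans_t1n _ _ _ _ dML) => [M0 ch | M0 M1 ch _];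
  exact: leaf_no_child hc hL ch.
Qed.

Lemma leaf_perfect_matching q p L : consecutive A k q p -> node_of A q p L ->
  exists M, perfect_matching L.1 L.2 M.
Proof.
move=> hc hL; have [Iq Ip] := consecutive_idx (leqnn k) hc; have qp := consecutive_ltA hc.
have [x [y [x1 y2 xy]]] := node_has_edge Iq Ip qp hL.
have k2 : 2 <= k <= k by rewrite leqnn andbT; case: hreg.
have [M0 [pmM0 _]] := regular_consecutive k2 hc (node1_A hL x1) (node2_A hL y2) xy.
exists [set e in M0 | e.1 \in L.1]; apply: (perfect_matching_restrict pmM0).
- by apply/subsetP => z /(node1_A hL).
- by apply/subsetP => z /(node2_A hL).
- by move=> x' y' x1' ys; exact: (node_edge_up Iq Ip qp hL x1' ys).
- by move=> x' y' xq y2'; exact: (node_edge_down Iq Ip qp hL xq y2').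
Qed.

Lemma consecutive_pred p : idx p -> p != 1 -> exists q, consecutive A k q p.
Proof.
move=> Ip p1; pose rank i := #|[set j : 'I_k.+1 | (1 <= j) && ltA j i]|.
have rank_lt i j : idx i -> idx j -> ltA i j -> rank i < rank j.
  move=> Ii Ij ij; apply: proper_card; apply/properP; split.
    apply/subsetP => l; rewrite !inE => /andP [l1 li]; rewrite l1 /=.
    have Il : idx l by rewrite l1 -ltnS ltn_ord.
    exact: ltA_trans Il Ii Ij li ij.
  have ik : i < k.+1 by case/andP: Ii.
  exists (Ordinal ik); rewrite !inE /=; first by case/andP: Ii => ->.
  by apply/negP => /andP [_ /ltA_irr].
have l1p : ltA 1 p.
  case: (ltA_total idx1 Ip) => [e1p|//|/andP [p1s _]]; first by rewrite -e1p eqxx in p1.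
  by move: p1; rewrite (sqle_idx_anti Ip idx1 p1s (sqle_A1 Ip)) eqxx.
pose P (j : 'I_k.+1) := (1 <= j) && ltA j p.
have P1 : P (inord 1) by rewrite /P inordK ?l1p //; case/andP: Ip; lia.
case: (@arg_maxnP _ _ P (fun j => rank j) P1) => q /andP [q1 qp] qmax.
have Iq : idx q by rewrite q1 -ltnS ltn_ord.
exists q; split => // i Ii; apply/negP; case/andP => qi ip.
have ik : i < k.+1 by case/andP: Ii.
have Pi : P (inord i) by rewrite /P inordK // ip andbT; case/andP: Ii.
by move: (qmax _ Pi); rewrite /= inordK // leqNgt (rank_lt _ _ Iq Ii qi).
Qed.

Lemma leaf_below p y : idx p -> y \in A p -> y \notin A 1 ->
  exists q L, [/\ consecutive A k q p, node_of A q p L & y \in L.2].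
Proof.
move=> Ip yp yn1; have [q hq] : exists q, consecutive A k q p.
  by apply: (consecutive_pred Ip); apply: contraNneq yn1 => p1; rewrite -p1.
exists q, (comp_at (A q) (A p) y); split => //; last by rewrite /= inE yp connect0.
by apply: node_of_comp_at; rewrite inE yp orbT.
Qed.

Lemma width_pos x : 0 < w.
Proof.
case: hreg => _ [_ [_ [coverA _]]]; have [i Ii xi] := coverA x.
by rewrite -(card_A Ii) card_gt0; apply/set0Pn; exists x.
Qed.

Section Family.
Variables (F : {set {set T} * {set T}}) (Mt : {set T} * {set T} -> {set T * T}).
Hypotheses (hFnode : forall N, N \in F -> is_node A k N) (hAF : ancestor_free A k F)
  (hFpm : forall N, N \in F -> perfect_matching N.1 N.2 (Mt N)).

Definition leaf N := exists q p, consecutive A k q p /\ node_of A q p N.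
Definition extF N := N \in F \/ leaf N /\ forall N0, N0 \in F -> ~ descendant A k N N0.

Definition Mext N : {set T * T} :=
  if N \in F then Mt N else epsilon (inhabits set0) (fun M => perfect_matching N.1 N.2 M).

Lemma extF_node N : extF N -> exists t p s, [/\ t <= k, consecutive A t p s & node_of A p s N].
Proof.
case=> [/hFnode [t [p [s [/andP [_ tk] [? ?]]]]] | [[q [p [? ?]]] _]]; first by exists t, p, s.
by exists k, q, p.
Qed.

Lemma extF_ancestor_free M N : extF M -> extF N -> ~ descendant A k M N.
Proof.
move=> [MF|[_ noF]] [NF|[[q [p [hc hL]]] _]]; try exact: (leaf_no_descendant hc hL).
  exact: hAF.
exact: noF.
Qed.

Lemma extF_perfect_matching N : extF N -> perfect_matching N.1 N.2 (Mext N).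
Proof.
rewrite /Mext; case: ifPn => [/hFpm // | NF [/(negP NF) // | [[q [p [hc hL]]] _]]].
exact: epsilon_spec (leaf_perfect_matching hc hL).
Qed.

Lemma extF_nested_eq t a b N t' c d M v : extF N -> extF M ->
  t <= k -> consecutive A t a b -> node_of A a b N ->
  t' <= k -> consecutive A t' c d -> node_of A c d M ->
  leA a c -> leA d b -> v \in M.1 :|: M.2 -> v \in Int N -> M = N.
Proof.
move=> eN eM tk hab hN t'k hcd hM ac db vM vN.
by case: (node_Int_descendant tk hab hN t'k hcd hM ac db vM vN) => // /(extF_ancestor_free eM eN).
Qed.

Lemma extF_eq_lower N1 N2 x : extF N1 -> extF N2 -> x \in N1.1 -> x \in N2.1 -> N1 = N2.
Proof.
move=> e1 e2 x1 x2.
have [t1 [p [s1 [t1k c1 n1]]]] := extF_node e1; have [Ip Is1] := consecutive_idx t1k c1.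
have [t2 [p2 [s2 [t2k c2 n2]]]] := extF_node e2; have [Ip2 Is2] := consecutive_idx t2k c2.
have ep := idx_unique Ip Ip2 (node1_A n1 x1) (node1_A n2 x2); subst p2.
have x1N : x \in N1.1 :|: N1.2 by rewrite inE x1.
have x2N : x \in N2.1 :|: N2.2 by rewrite inE x2.
have pp : leA p p by left.
case: (leA_total Is1 Is2) => [s12|s21].
  exact: extF_nested_eq e2 e1 t2k c2 n2 t1k c1 n1 pp s12 x1N
    (subsetP (node_sub_Int Ip Is2 (consecutive_ltA c2) n2) x x2N).
apply/esym; exact: extF_nested_eq e1 e2 t1k c1 n1 t2k c2 n2 pp s21 x2N
  (subsetP (node_sub_Int Ip Is1 (consecutive_ltA c1) n1) x x1N).
Qed.

Lemma extF_eq_upper N1 N2 y : extF N1 -> extF N2 -> y \in N1.2 -> y \in N2.2 -> N1 = N2.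
Proof.
move=> e1 e2 y1 y2.
have [t1 [p1 [s [t1k c1 n1]]]] := extF_node e1; have [Ip1 Is] := consecutive_idx t1k c1.
have [t2 [p2 [s2 [t2k c2 n2]]]] := extF_node e2; have [Ip2 Is2] := consecutive_idx t2k c2.
have es := idx_unique Is Is2 (node2_A n1 y1) (node2_A n2 y2); subst s2.
have y1N : y \in N1.1 :|: N1.2 by rewrite inE y1 orbT.
have y2N : y \in N2.1 :|: N2.2 by rewrite inE y2 orbT.
have ss : leA s s by left.
case: (leA_total Ip1 Ip2) => [p12|p21].
  apply/esym; exact: extF_nested_eq e1 e2 t1k c1 n1 t2k c2 n2 p12 ss y2N
    (subsetP (node_sub_Int Ip1 Is (consecutive_ltA c1) n1) y y1N).
exact: extF_nested_eq e2 e1 t2k c2 n2 t1k c1 n1 p21 ss y1N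
  (subsetP (node_sub_Int Ip2 Is (consecutive_ltA c2) n2) y y2N).
Qed.

Lemma extF_lower_is_upper N y : extF N -> y \in N.1 -> y \notin A 1 ->
  exists2 N', extF N' & y \in N'.2.
Proof.
move=> eN y1 yn1; have [t3 [p [r [t3k c3 n3]]]] := extF_node eN.
have [Ip Ir] := consecutive_idx t3k c3; have yp := node1_A n3 y1.
have [q [L [hq hL yL]]] := leaf_below Ip yp yn1.
have [[N0 N0F dL]|noF] := classic (exists2 N0, N0 \in F & descendant A k L N0); last first.
  by exists L => //; right; split; [exists q, p | move=> N0 N0F dL; apply: noF; exists N0].
have [Iq _] := consecutive_idx (leqnn k) hq; have qp := consecutive_ltA hq.
have [x xL _] := node2_gt Iq Ip qp hL yL.
have [t [a [b [/andP [_ tk] [hab hN]]]]] := hFnode N0F.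
have [Ia Ib] := consecutive_idx tk hab; have ab := consecutive_ltA hab.
have LInt z : z \in L.1 :|: L.2 -> z \in Int N0.
  move=> zL; apply: (subsetP (descendant_Int dL)).
  exact: (subsetP (node_sub_Int Iq Ip qp hL)).
have yN : y \in Int N0 by apply: LInt; rewrite inE yL orbT.
have [ap [pb|pb]] := Int_leA Ia Ib hN Ip yp yN.
  by exists N0; [left | rewrite -pb in hN; exact: (Int_node2 Ip hN yN yp)].
have xN : x \in Int N0 by apply: LInt; rewrite inE xL.
have [aq _] := Int_leA Ia Ib hN Iq (node1_A hL xL) xN.
have lap : ltA a p by case: aq => [->|aq] //; exact: (ltA_trans Ia Iq Ip aq qp).
have rb : leA r b.
  case: (ltA_total Ir Ib) => [->|rb|br]; [by left | by right | exfalso].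
  exact: (consecutive_no_cross c3 hab lap pb br).
have y3 : y \in N.1 :|: N.2 by rewrite inE y1.
have eN0 := extF_nested_eq (or_introl N0F) eN tk hab hN t3k c3 n3 (or_intror lap) rb y3 yN.
rewrite eN0 in n3; have [ea _] := node_of_idx Ia Ib ab hN Ip Ir n3.
by rewrite ea in lap; case: (ltA_irr lap).
Qed.

Definition matched x y := exists2 N, extF N & (x, y) \in Mext N.

Lemma matched_lt x y : matched x y -> (x < y)%O.
Proof. by case=> N eN /(perfect_matching_edge (extF_perfect_matching eN)) []. Qed.

Lemma matched_fun x y y' : matched x y -> matched x y' -> y = y'.
Proof.
move=> [N eN xy] [N' eN' xy'].
have [x1 _ _] := perfect_matching_edge (extF_perfect_matching eN) xy.
have [x1' _ _] := perfect_matching_edge (extF_perfect_matching eN') xy'.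
rewrite (extF_eq_lower eN eN' x1 x1') in xy.
exact: (perfect_matching_fun (extF_perfect_matching eN') xy xy').
Qed.

Lemma matched_inj x x' y : matched x y -> matched x' y -> x = x'.
Proof.
move=> [N eN xy] [N' eN' x'y].
have [_ y2 _] := perfect_matching_edge (extF_perfect_matching eN) xy.
have [_ y2' _] := perfect_matching_edge (extF_perfect_matching eN') x'y.
rewrite (extF_eq_upper eN eN' y2 y2') in xy.
exact: (perfect_matching_inj (extF_perfect_matching eN') xy x'y).
Qed.

Definition extV y := exists2 N, extF N & y \in N.1 :|: N.2.

Lemma matched_pred y : extV y -> y \notin A 1 -> exists2 x, extV x & matched x y.
Proof.
move=> [N eN yN] yn1.
have [N' eN' y2] : exists2 N', extF N' & y \in N'.2.
  by move: yN; rewrite inE => /orP [/(extF_lower_is_upper eN)/(_ yn1) //|y2]; exists N.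
have [x xy] := perfect_matching_cover2 (extF_perfect_matching eN') y2.
have [x1 _ _] := perfect_matching_edge (extF_perfect_matching eN') xy.
by exists x; [exists N'; rewrite // inE x1 | exists N'].
Qed.

Definition up x := epsilon (inhabits x)
  (fun y => matched x y \/ (forall y', ~ matched x y') /\ y = x).

Lemma upP x : matched x (up x) \/ (forall y, ~ matched x y) /\ up x = x.
Proof.
apply: (epsilon_spec _ (fun y => matched x y \/ (forall y', ~ matched x y') /\ y = x)).
have [[y xy]|none] := classic (exists y, matched x y); first by exists y; left.
by exists x; right; split => // y xy; apply: none; exists y.
Qed.

Lemma up_matched x y : matched x y -> up x = y.
Proof.
by move=> xy; case: (upP x) => [xu | [none _]]; [exact: (matched_fun xu xy) | case: (none y)].
Qed.

Lemma up_ge x : (x <= up x)%O.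
Proof. by case: (upP x) => [/matched_lt/ltW | [_ ->]]. Qed.

Lemma up_inj u v : up u = up v -> [\/ u = v, up u = u | up v = v].
Proof.
case: (upP u) => [mu|[_ ->]]; last by constructor 2.
case: (upP v) => [mv|[_ ->]] e; last by constructor 3.
by constructor 1; rewrite e in mu; exact: (matched_inj mu mv).
Qed.

Lemma up_cover y : y \in \bigcup_(N in F) (N.1 :|: N.2) -> exists2 a, a \in A 1 & fconnect up a y.
Proof.
move=> /bigcupP [N NF yN]; apply: (fconnect_from_roots (S := extV)); last by exists N => //; left.
move=> z /matched_pred pred_z /pred_z [x ex xz].
by exists x => //; split; [exact: up_matched | exact: matched_lt].
Qed.

Lemma regular_chain_partition :
  exists ch : 'I_w -> {set T},
    [/\ (forall i j, i != j -> [disjoint ch i & ch j]),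
        \bigcup_i ch i = \bigcup_(N in F) (N.1 :|: N.2),
        (forall i, chain (ch i)) &
        (forall N e, N \in F -> e \in Mt N ->
           exists i, (e.1 \in ch i) && (e.2 \in ch i))].
Proof.
have [ch [disj cov chn edge]] :=
  orbit_chain_partition up_ge (antichain_A idx1) up_inj (card_A idx1) up_cover.
exists ch; split => // N e NF eM; have [e1 e2 _] := perfect_matching_edge (hFpm NF) eM.
have ue : up e.1 = e.2.
  by apply: up_matched; exists N; [left | rewrite /Mext NF -surjective_pairing].
have inF z : z \in N.1 :|: N.2 -> z \in \bigcup_(N in F) (N.1 :|: N.2).
  by move=> zN; apply/bigcupP; exists N.
by rewrite -ue; apply: edge; apply: inF; rewrite inE ?ue ?e1 ?e2 ?orbT.
Qed.

End Family.

End RegularPoset.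

Theorem proposition11 (d : Order.disp_t) (T : finPOrderType d) (w k : nat)
  (A : nat -> {set T}) (F : {set {set T} * {set T}})
  (Mt : {set T} * {set T} -> {set T * T}) :
  width T = w ->
  regular_poset w k A ->
  (forall N, N \in F -> is_node A k N) ->
  ancestor_free A k F ->
  (forall N, N \in F -> perfect_matching N.1 N.2 (Mt N)) ->
  exists ch : 'I_w -> {set T},
    [/\ (forall i j, i != j -> [disjoint ch i & ch j]),
        \bigcup_i ch i = \bigcup_(N in F) (N.1 :|: N.2),
        (forall i, chain (ch i)) &
        (forall N e, N \in F -> e \in Mt N ->
           exists i, (e.1 \in ch i) && (e.2 \in ch i))].
Proof.
move=> hw hreg hF hAF hM; have [w0|wpos] := posnP w.
  have noT (x : T) : False by move: (width_pos hreg x); rewrite w0.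
  exists (fun=> set0); split => [i j _|||N e _ _]; last by case: (noT e.1).
  - by apply/pred0P => x; case: (noT x).
  - by apply/setP => x; case: (noT x).
  - by move=> i; apply/forallP => x; case: (noT x).
exact: (regular_chain_partition hw hreg wpos hF hAF hM).
Qed.
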